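(* Let $(R_0,R_1,s,t,i,\circ)$ be a strict $2$-rack. Then $\ker(s)$ and $\ker(t)$ act trivially on each other: $f\lhd g=f$ and $g\lhd f=g$ for all $f\in\ker(t)$ and all $g\in\ker(s)$.
   Context: A (right) rack is a set with a binary operation $\lhd$ such that each $x\mapsto x\lhd y$ is bijective and $(x\lhd y)\lhd z=(x\lhd z)\lhd(y\lhd z)$. A pointed rack is a rack $X$ with an element $1$ such that $1\lhd x=1$ and $x\lhd 1=x$ for all $x$. A strict $2$-rack (categorical rack) is a category object in racks: pointed racks $R_0$ (objects) and $R_1$ (morphisms) with morphisms of pointed racks $s,t:R_1\to R_0$ (source, target), $i:R_0\to R_1$ (identities) and a composition $\circ:R_1\times_{R_0}R_1\to R_1$ (defined on pairs $(g,f)$ with $s(g)=t(f)$) which is a rack morphism, where $R_1\times_{R_0}R_1$ carries the componentwise rack operation, satisfying the usual category axioms ($s\circ i=t\circ i=\mathrm{id}$, associativity, $i$ gives two-sided identities, $s(g\circ f)=s(f)$, $t(g\circ f)=t(g)$). That $\circ$ is a rack morphism is the middle four exchange property $(g_1\lhd g_2)\circ(f_1\lhd f_2)=(g_1\circ f_1)\lhd(g_2\circ f_2)$ for composable pairs. Here $\ker(s)=\{f\in R_1: s(f)=1\}$ and $\ker(t)=\{f\in R_1:t(f)=1\}$. *)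

From Stdlib Require Import ssreflect ssrfun.

Record Rack := {
  rk_carrier :> Type;
  rk_op : rk_carrier -> rk_carrier -> rk_carrier;
  rk_bij : forall y, bijective (fun x => rk_op x y);
  rk_sd : forall x y z, rk_op (rk_op x y) z = rk_op (rk_op x z) (rk_op y z)
}.

Notation "x <| y" := (rk_op _ x y) (at level 40, left associativity).

Record PointedRack := {
  pr_rack :> Rack;
  pr_one : pr_rack;
  pr_one_l : forall x : pr_rack, pr_one <| x = pr_one;
  pr_one_r : forall x : pr_rack, x <| pr_one = x
}.

Definition pointed_rack_morphism (X Y : PointedRack) (f : X -> Y) : Prop :=
  (forall x y : X, f (x <| y) = f x <| f y) /\ f (pr_one X) = pr_one Y.

(* The composition g \o f is
   only defined for composable pairs (s g = t f); we model it as a total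
   function [comp] whose values are constrained only on composable pairs. *)
Record Strict2Rack := {
  R0 : PointedRack;
  R1 : PointedRack;
  src : R1 -> R0;
  tgt : R1 -> R0;
  idm : R0 -> R1;
  comp : R1 -> R1 -> R1;
  src_morph : pointed_rack_morphism R1 R0 src;
  tgt_morph : pointed_rack_morphism R1 R0 tgt;
  idm_morph : pointed_rack_morphism R0 R1 idm;
  (* composition is a rack morphism R1 x_{R0} R1 -> R1 (middle-four exchange) *)
  comp_exchange : forall g1 f1 g2 f2 : R1,
      src g1 = tgt f1 -> src g2 = tgt f2 ->
      comp (g1 <| g2) (f1 <| f2) = comp g1 f1 <| comp g2 f2;
  src_idm : forall x, src (idm x) = x;
  tgt_idm : forall x, tgt (idm x) = x;
  src_comp : forall g f, src g = tgt f -> src (comp g f) = src f;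
  tgt_comp : forall g f, src g = tgt f -> tgt (comp g f) = tgt g;
  comp_assoc : forall h g f, src h = tgt g -> src g = tgt f ->
      comp h (comp g f) = comp (comp h g) f;
  comp_idm_l : forall f, comp (idm (tgt f)) f = f;
  comp_idm_r : forall f, comp f (idm (src f)) = f
}.

Definition ker_src (C : Strict2Rack) (f : R1 C) : Prop := src C f = pr_one (R0 C).
Definition ker_tgt (C : Strict2Rack) (f : R1 C) : Prop := tgt C f = pr_one (R0 C).

From Stdlib Require Import ssreflect.

(* An arrow [f] with target 1 is [1 o f] and an arrow [g] with source 1 is
   [g o 1], where 1 is the identity on the base point.  The middle-four
   exchange then computes [f <| g = (1 <| g) o (f <| 1) = 1 o f = f], and
   symmetrically [g <| f = (g <| 1) o (1 <| f) = g o 1 = g]. *)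

Section Strict2RackKernels.

Variable C : Strict2Rack.

Local Notation one1 := (pr_one (R1 C)).
Local Notation one0 := (pr_one (R0 C)).

Lemma idm_one : idm C one0 = one1.
Proof. by case: (idm_morph C). Qed.

Lemma src_one : src C one1 = one0.
Proof. by case: (src_morph C). Qed.

Lemma tgt_one : tgt C one1 = one0.
Proof. by case: (tgt_morph C). Qed.

Lemma comp_one_l (f : R1 C) : ker_tgt C f -> comp C one1 f = f.
Proof. by rewrite /ker_tgt => Hf; rewrite -idm_one -Hf comp_idm_l. Qed.

Lemma comp_one_r (g : R1 C) : ker_src C g -> comp C g one1 = g.
Proof. by rewrite /ker_src => Hg; rewrite -idm_one -Hg comp_idm_r. Qed.

Lemma ker_tgt_act_ker_src (f g : R1 C) :
  ker_tgt C f -> ker_src C g -> f <| g = f.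
Proof.
move=> Hf Hg.
have one_f : src C one1 = tgt C f by rewrite src_one.
have g_one : src C g = tgt C one1 by rewrite tgt_one.
have := comp_exchange C one1 f g one1 one_f g_one.
by rewrite (comp_one_l _ Hf) (comp_one_r _ Hg) pr_one_l pr_one_r comp_one_l.
Qed.

Lemma ker_src_act_ker_tgt (f g : R1 C) :
  ker_tgt C f -> ker_src C g -> g <| f = g.
Proof.
move=> Hf Hg.
have g_one : src C g = tgt C one1 by rewrite tgt_one.
have one_f : src C one1 = tgt C f by rewrite src_one.
have := comp_exchange C g one1 one1 f g_one one_f.
by rewrite (comp_one_l _ Hf) (comp_one_r _ Hg) pr_one_l pr_one_r comp_one_r.
Qed.

End Strict2RackKernels.

Theorem mainTheorem3 (C : Strict2Rack) (f g : R1 C) :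
  ker_tgt C f -> ker_src C g -> f <| g = f /\ g <| f = g.
Proof.
move=> Hf Hg.
by split; [exact: ker_tgt_act_ker_src | exact: ker_src_act_ker_tgt].
Qed.
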